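(* Let $M\subset E^2$ be a centrally symmetric convex body with center of symmetry $o$. For every triangle $\Delta$ inscribed in $M$ (i.e. with all vertices in the boundary of $M$) whose centroid is $o$, we have $M\subset 3\Delta$, where $3\Delta$ denotes the image of $\Delta$ under the homothety with center $o$ and ratio $3$.
   Context: A convex body is a compact convex set with nonempty interior. The centroid of a triangle is the average of its three vertices. *)

From HB Require Import structures.
From mathcomp Require Import all_boot all_order all_algebra.
From mathcomp Require Import all_classical all_reals all_analysis.
Set Implicit Arguments. Unset Strict Implicit. Unset Printing Implicit Defensive.
Import Order.TTheory GRing.Theory Num.Theory.
Import numFieldNormedType.Exports.
Local Open Scope classical_set_scope.
Local Open Scope ring_scope.

Notation plane R := 'rV[R]_2.

Definition convex_body (R : realType) (M : set (plane R)) : Prop :=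
  compact M /\ convex_set (M : set (convex_lmodType (plane R))) /\
  interior M !=set0.

Definition centrally_symmetric (R : realType) (M : set (plane R)) (o : plane R) :=
  forall x, M x -> M (o *+ 2 - x).

Definition bd (R : realType) (M : set (plane R)) : set (plane R) :=
  closure M `\` interior M.

Definition noncollinear (R : realType) (a b c : plane R) : Prop :=
  \det (col_mx (b - a) (c - a)) != 0.

Definition triangle (R : realType) (a b c : plane R) : set (plane R) :=
  [set x | exists l1 l2 l3 : R, [/\ 0 <= l1, 0 <= l2, 0 <= l3,
     l1 + l2 + l3 = 1 & x = l1 *: a + l2 *: b + l3 *: c]].

Definition homothety (R : realType) (o : plane R) (k : R) (S : set (plane R)) :=
  [set o + k *: (x - o) | x in S].

From HB Require Import structures.
From mathcomp Require Import all_boot all_order all_algebra.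
From mathcomp Require Import all_classical all_reals all_analysis.
From mathcomp Require Import ring lra.
Import Order.TTheory GRing.Theory Num.Theory.
Import numFieldNormedType.Exports.
Local Open Scope classical_set_scope.
Local Open Scope ring_scope.

Set Implicit Arguments.
Unset Strict Implicit.
Unset Printing Implicit Defensive.

(* Write x - o = al (a - o) + be (b - o).  As a + b + c = 3 o, the point x is
   in 3 Delta iff 2 al - be >= -3, 2 be - al >= -3 and al + be <= 3, and these
   three inequalities are exchanged by relabelling the vertices, so it suffices
   to prove the first.  If it failed, one of a, b, c would be a strict convex
   combination of three non-collinear points chosen among x, 2 o - x and the
   reflections 2 o - a, 2 o - b, 2 o - c, all of which lie in M by symmetry.
   Since an open triangle with vertices in a convex set lies in its interior,
   that vertex would be an interior point of M, not a boundary point. *)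

Lemma det_mx22 (R : comNzRingType) (A : 'M[R]_2) :
  \det A = A 0 0 * A 1 1 - A 0 1 * A 1 0.
Proof.
rewrite (expand_det_row _ 0) !big_ord_recl big_ord0 addr0 /cofactor !det_mx11 !mxE /=.
rewrite expr0 expr1 !mul1r mulN1r mulrN.
by congr (A _ _ * A _ _ - A _ _ * A _ _); apply: val_inj.
Qed.

Definition cross (R : comNzRingType) (u v : 'rV[R]_2) : R :=
  u 0 0 * v 0 1 - u 0 1 * v 0 0.

Lemma det_col_mx2 (R : comNzRingType) (u v : 'rV[R]_2) :
  \det (col_mx u v) = cross u v.
Proof.
have row0 j : col_mx u v 0 j = u 0 j.
  by rewrite -(col_mxEu u v); congr (col_mx u v _ j); exact/val_inj.
have row1 j : col_mx u v 1 j = v 0 j.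
  by rewrite -(col_mxEd u v); congr (col_mx u v _ j); exact/val_inj.
by rewrite det_mx22 !row0 !row1.
Qed.

Lemma cross_combl (R : comNzRingType) (u v : 'rV[R]_2) p q :
  cross (p *: u + q *: v) v = p * cross u v.
Proof. by rewrite /cross !mxE; ring. Qed.

Lemma cross_combr (R : comNzRingType) (u v : 'rV[R]_2) p q :
  cross u (p *: u + q *: v) = q * cross u v.
Proof. by rewrite /cross !mxE; ring. Qed.

Lemma cramer2 (R : fieldType) (u v w : 'rV[R]_2) : cross u v != 0 ->
  w = (cross w v / cross u v) *: u + (cross u w / cross u v) *: v.
Proof.
rewrite /cross => uv; apply/rowP => j; rewrite !mxE.
have [->|->] : j = 0 \/ j = 1 by case: j => [[|[|]]] //= ?; [left|right]; apply: val_inj.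
all: by field.
Qed.

Lemma continuous_cross (R : realFieldType) (T : topologicalType)
    (f g : T -> 'rV[R]_2) :
  continuous f -> continuous g -> continuous (fun x => cross (f x) (g x)).
Proof.
move=> fc gc x; have coord i j (h : T -> 'rV[R]_2) :
    continuous h -> {for x, continuous (fun y => h y i j)}.
  by move=> hc; exact: continuous_comp (hc x) (@coord_continuous R 1 2 i j (h x)).
by apply: cvgB; apply: cvgM; apply: coord.
Qed.

Section ConvexCombination.
Variables (R : realFieldType) (E : lmodType R) (A : set (convex_lmodType E)).
Hypothesis convA : convex_set A.

Lemma convex_comb2 x y t : A x -> A y -> 0 <= t -> t <= 1 ->
  A (t *: x + (1 - t) *: y).
Proof.
by move=> Ax Ay t0 t1; apply: set_mem; apply: (convA (Itv01 t0 t1)); apply: mem_set.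
Qed.

Lemma convex_comb3 x y z l1 l2 l3 : A x -> A y -> A z ->
  0 <= l1 -> 0 <= l2 -> 0 <= l3 -> l1 + l2 + l3 = 1 ->
  A (l1 *: x + l2 *: y + l3 *: z).
Proof.
move=> Ax Ay Az l1_ge0 l2_ge0 l3_ge0 l_sum.
have [l1_eq1|l1_neq1] := eqVneq l1 1.
  have [-> ->] : l2 = 0 /\ l3 = 0 by split; lra.
  by rewrite l1_eq1 scale1r !scale0r !addr0.
have l1_lt1 : 0 < 1 - l1 by rewrite subr_gt0 lt_neqAle l1_neq1; lra.
set t := l2 / (1 - l1).
have -> : l1 *: x + l2 *: y + l3 *: z = l1 *: x + (1 - l1) *: (t *: y + (1 - t) *: z).
  rewrite scalerDr !scalerA -addrA mulrBr mulr1 /t [(1 - l1) * _]mulrC divfK ?gt_eqF //.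
  by congr (_ + (_ *: _ + _ *: _)); lra.
apply: convex_comb2 => //; last lra.
apply: convex_comb2 => //; first exact: divr_ge0 (ltW _).
by rewrite ler_pdivrMr // mul1r; lra.
Qed.

End ConvexCombination.

Section OpenTriangle.
Variables (R : realFieldType) (P Q S : 'rV[R]_2).
Hypothesis PQS : cross (Q - P) (S - P) != 0.

Let s y := cross (y - P) (S - P) / cross (Q - P) (S - P).
Let t y := cross (Q - P) (y - P) / cross (Q - P) (S - P).

Let open_triangle :=
  [set y | 0 < s y] `&` [set y | 0 < t y] `&` [set y | 0 < 1 - s y - t y].

Let open_triangle_open : open open_triangle.
Proof.
have cross_cont (f g : 'rV[R]_2 -> 'rV[R]_2) : continuous f -> continuous g ->
    continuous (fun y => cross (f y) (g y) / cross (Q - P) (S - P)).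
  by move=> fc gc y; exact: cvgMr_tmp (continuous_cross fc gc (x := y)).
have shift_cont : continuous (fun y : 'rV[R]_2 => y - P).
  by move=> y; exact: cvgB cvg_id (cvg_cst P).
have s_cont : continuous s :=
  cross_cont _ _ shift_cont (@cst_continuous _ _ (S - P)).
have t_cont : continuous t :=
  cross_cont _ _ (@cst_continuous _ _ (Q - P)) shift_cont.
apply: openI; first apply: openI.
- by apply: (@open_comp _ _ s [set r | 0 < r]); [move=> y _; exact: s_cont | exact: open_gt].
- by apply: (@open_comp _ _ t [set r | 0 < r]); [move=> y _; exact: t_cont | exact: open_gt].
apply: (@open_comp _ _ (fun y => 1 - s y - t y) [set r | 0 < r]); last exact: open_gt.
by move=> y _; exact: (cvgB (cvgB (cvg_cst (1 : R)) (s_cont y)) (t_cont y)).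
Qed.

Let open_triangle_comb l1 l2 l3 : 0 < l1 -> 0 < l2 -> 0 < l3 -> l1 + l2 + l3 = 1 ->
  open_triangle (l1 *: P + l2 *: Q + l3 *: S).
Proof.
move=> l1_gt0 l2_gt0 l3_gt0 l_sum.
have shiftE : l1 *: P + l2 *: Q + l3 *: S - P = l2 *: (Q - P) + l3 *: (S - P).
  have -> : l1 = 1 - l2 - l3 by lra.
  by apply/rowP => j; rewrite !mxE; ring.
rewrite /open_triangle /s /t /= shiftE cross_combl cross_combr !mulfK //.
by split; first split; lra.
Qed.

Let open_triangle_sub (M : set 'rV[R]_2) :
  convex_set (M : set (convex_lmodType 'rV[R]_2)) -> M P -> M Q -> M S ->
  open_triangle `<=` M.
Proof.
move=> convM MP MQ MS y [[s_gt0 t_gt0] r_gt0].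
rewrite -[y](subrKC P) {1}(cramer2 (y - P) PQS).
have -> : P + (s y *: (Q - P) + t y *: (S - P)) =
          (1 - s y - t y) *: P + s y *: Q + t y *: S.
  by apply/rowP => j; rewrite !mxE; ring.
by apply: convex_comb3 => //; [exact: ltW | exact: ltW | exact: ltW | ring].
Qed.

Lemma interior_triangle (M : set 'rV[R]_2) l1 l2 l3 :
  convex_set (M : set (convex_lmodType 'rV[R]_2)) -> M P -> M Q -> M S ->
  0 < l1 -> 0 < l2 -> 0 < l3 -> l1 + l2 + l3 = 1 ->
  M° (l1 *: P + l2 *: Q + l3 *: S).
Proof.
move=> convM MP MQ MS l1_gt0 l2_gt0 l3_gt0 l_sum.
have := open_triangle_sub convM MP MQ MS.
rewrite (open_subsetE _ open_triangle_open); apply.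
exact: open_triangle_comb.
Qed.

End OpenTriangle.

Lemma noncollinear_swap (R : realType) (a b c : plane R) :
  noncollinear a b c -> noncollinear b a c.
Proof.
rewrite /noncollinear !det_col_mx2.
rewrite (_ : cross (a - b) (c - b) = - cross (b - a) (c - a)) ?oppr_eq0 //.
by rewrite /cross !mxE; ring.
Qed.

Lemma noncollinear_rotate (R : realType) (a b c : plane R) :
  noncollinear a b c -> noncollinear c a b.
Proof.
rewrite /noncollinear !det_col_mx2.
by rewrite (_ : cross (a - c) (b - c) = cross (b - a) (c - a)) // /cross !mxE; ring.
Qed.

Section CentroidFrame.
Variables (R : realType) (a b c o : plane R).
Hypothesis centroid : 3^-1 *: (a + b + c) = o.

Lemma centroid_cross : cross (b - a) (c - a) = 3 * cross (a - o) (b - o).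
Proof. by rewrite -centroid /cross !mxE; field. Qed.

Lemma centroid_cross_neq0 : noncollinear a b c -> cross (a - o) (b - o) != 0.
Proof.
by rewrite /noncollinear det_col_mx2 centroid_cross mulf_eq0 negb_or => /andP[].
Qed.

Lemma centroid_frame_opp : o - (a - o) - (b - o) = c.
Proof. by apply/rowP => j; rewrite -centroid !mxE; field. Qed.

Lemma homothety_centroid_triangle al be :
  -3 <= 2 * al - be -> -3 <= 2 * be - al -> -3 <= - al - be ->
  homothety o 3 (triangle a b c) (o + (al *: (a - o) + be *: (b - o))).
Proof.
move=> al_ge be_ge sum_ge.
(* The barycentric coordinates in abc of o + (al (a - o) + be (b - o)) / 3. *)
exists (((2 * al - be + 3) / 9) *: a + ((2 * be - al + 3) / 9) *: b
        + ((3 - al - be) / 9) *: c).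
  by do 3 eexists; split; [| | | | reflexivity]; lra.
by apply/rowP => j; rewrite -centroid !mxE; field.
Qed.

End CentroidFrame.

Section BoundaryTriangle.
Variables (R : realType) (M : set (plane R)) (a b c o : plane R).
Hypotheses (convM : convex_set (M : set (convex_lmodType (plane R))))
  (closedM : closed M) (symM : centrally_symmetric M o).
Hypotheses (abc : noncollinear a b c) (centroid : 3^-1 *: (a + b + c) = o).
Hypotheses (bd_a : bd M a) (bd_b : bd M b) (bd_c : bd M c).

(* In the frame (o; a - o, b - o) the vertices a, b, c have coordinates
   (1, 0), (0, 1), (-1, -1), and the symmetry of M is (p, q) |-> (-p, -q). *)
Let pt (p q : R) := o + (p *: (a - o) + q *: (b - o)).

Let mem_pt_opp (p q : R) : M (pt p q) -> M (pt (- p) (- q)).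
Proof.
move/symM; congr M; rewrite /pt.
by apply/rowP => j; rewrite !mxE; ring.
Qed.

Let interior_pt (p1 q1 p2 q2 p3 q3 k1 k2 k3 p q : R) :
  M (pt p1 q1) -> M (pt p2 q2) -> M (pt p3 q3) ->
  (p2 - p1) * (q3 - q1) != (q2 - q1) * (p3 - p1) ->
  0 < k1 -> 0 < k2 -> 0 < k3 ->
  (k1 + k2 + k3) * p = k1 * p1 + k2 * p2 + k3 * p3 ->
  (k1 + k2 + k3) * q = k1 * q1 + k2 * q2 + k3 * q3 ->
  M° (pt p q).
Proof.
move=> M1 M2 M3 nondeg k1_gt0 k2_gt0 k3_gt0 pE qE.
set k := k1 + k2 + k3; have k_gt0 : 0 < k by rewrite /k; lra.
have -> : pt p q = (k1 / k) *: pt p1 q1 + (k2 / k) *: pt p2 q2 + (k3 / k) *: pt p3 q3.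
  rewrite -[p](mulKf (lt0r_neq0 k_gt0)) -[q](mulKf (lt0r_neq0 k_gt0)) pE qE.
  by apply/rowP => j; rewrite !mxE /k; field; rewrite lt0r_neq0.
apply: interior_triangle => //.
- rewrite (_ : cross _ _ =
    ((p2 - p1) * (q3 - q1) - (q2 - q1) * (p3 - p1)) * cross (a - o) (b - o)).
    by apply: mulf_neq0; [rewrite subr_eq0 | exact: (centroid_cross_neq0 centroid abc)].
  by rewrite /pt /cross !mxE; ring.
- exact: divr_gt0.
- exact: divr_gt0.
- exact: divr_gt0.
- by rewrite -!mulrDl divff // lt0r_neq0.
Qed.

Let vertex_pts : [/\ pt 1 0 = a, pt 0 1 = b & pt (-1) (-1) = c].
Proof.
rewrite /pt !scale0r !scale1r !scaleN1r addr0 add0r !subrKC addrA.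
by split=> //; exact: centroid_frame_opp.
Qed.

Let vertex_interior (al be : R) :
  M (pt 1 0) -> M (pt 0 1) -> M (pt (-1) (-1)) -> M (pt al be) -> 3 < 2 * al - be ->
  [\/ M° (pt 1 0), M° (pt 0 1) | M° (pt (-1) (-1))].
Proof.
move=> Ma Mb Mc Mx gt3.
have := mem_pt_opp Ma; have := mem_pt_opp Mb; have := mem_pt_opp Mc.
rewrite !opprK oppr0 => M11 Mnb Mna; have Mnx := mem_pt_opp Mx.
have [al_le1|al_gt1] := lerP al 1.
  apply: Or32.
  by apply: (interior_pt (k1 := - be - 1) (k2 := al - be - 1) (k3 := 1) Mna M11 Mnx); lra.
have [d_le1|d_gt1] := lerP (al - be) 1.
  apply: Or33.
  by apply: (interior_pt (k1 := be - 1) (k2 := al - 1) (k3 := 1) Mna Mnb Mnx); lra.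
apply: Or31.
by apply: (interior_pt (k1 := al - 1) (k2 := al - be - 1) (k3 := 1) Mnb M11 Mx); lra.
Qed.

Lemma boundary_triangle_coord_ge (al be : R) :
  M (o + (al *: (a - o) + be *: (b - o))) -> -3 <= 2 * al - be.
Proof.
move=> /mem_pt_opp Mx; rewrite leNgt; apply/negP => lt_m3.
have gt3 : 3 < 2 * - al - - be by lra.
have [a_pt b_pt c_pt] := vertex_pts.
move: bd_a bd_b bd_c; rewrite /bd -(closure_id M).1 // -a_pt -b_pt -c_pt.
by move=> [Ma ?] [Mb ?] [Mc ?]; case: (vertex_interior Ma Mb Mc Mx gt3).
Qed.

End BoundaryTriangle.

Theorem mainTheorem2 (R : realType) (M : set 'rV[R]_2) (o : 'rV[R]_2)
  (a b c : 'rV[R]_2) :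
  convex_body M -> centrally_symmetric M o ->
  noncollinear a b c ->
  bd M a -> bd M b -> bd M c ->
  3^-1 *: (a + b + c) = o ->
  M `<=` homothety o 3 (triangle a b c).
Proof.
move=> [cptM [convM _]] symM abc bd_a bd_b bd_c centroid x Mx.
have closedM : closed M := compact_closed (@norm_hausdorff _ _) cptM.
set al := cross (x - o) (b - o) / cross (a - o) (b - o).
set be := cross (a - o) (x - o) / cross (a - o) (b - o).
have xE : x = o + (al *: (a - o) + be *: (b - o)).
  by rewrite -cramer2 ?subrKC // (centroid_cross_neq0 centroid abc).
rewrite xE in Mx *; apply: homothety_centroid_triangle => //.
- exact: (boundary_triangle_coord_ge convM closedM symM abc centroid bd_a bd_b bd_c).
- have centroid' : 3^-1 *: (b + a + c) = o by rewrite (addrC b).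
  apply: (boundary_triangle_coord_ge convM closedM symM (noncollinear_swap abc)
    centroid' bd_b bd_a bd_c).
  by rewrite [be *: _ + _]addrC.
- have centroid' : 3^-1 *: (c + a + b) = o by rewrite -addrA addrC.
  have := boundary_triangle_coord_ge convM closedM symM (noncollinear_rotate abc)
    centroid' bd_c bd_a bd_b (al := - be) (be := al - be).
  rewrite (_ : 2 * - be - (al - be) = - al - be); last by ring.
  apply; rewrite (_ : _ + _ = o + (al *: (a - o) + be *: (b - o))) //.
  by apply/rowP => j; rewrite -centroid !mxE; field.
Qed.
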